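(* Let $n>2r\ge 4$, let $G=\mathrm{S}_n$ acting on $\Omega=\binom{[n]}{r}$, let $\mathcal{B}_i=\{\alpha_1,\dots,\alpha_i\}\subseteq\Omega$, and let $G_i=G_{(\mathcal{B}_i)}$ be its pointwise stabiliser. Let $\alpha\in\Omega$. Then $|\alpha^{G_i}|$ is maximal among the orbit sizes $|\beta^{G_i}|$, $\beta\in\Omega$, if and only if there is a possible output $\alpha_{i+1}$ of $\mathtt{MetaGreedy}(\mathcal{B}_i)$ such that $(G_i)_\alpha\cong (G_i)_{\alpha_{i+1}}$.
   Context: For $u\in[n]$ let $N_{\mathcal{B}_i}(u)=\{\alpha\in\mathcal{B}_i : u\in\alpha\}$. The procedure $\mathtt{MetaGreedy}(\mathcal{B}_i)$ is: set $M_0=\emptyset$; for $j=1,\dots,r$, choose $m_j\in[n]\setminus M_{j-1}$ to be any point from any $G_i$-orbit $\Delta\subseteq[n]$ that maximises $\frac{|\Delta\setminus M_{j-1}|}{|\Delta\cap M_{j-1}|+1}$, and if this maximum value equals $1$ then additionally choose $m_j$ to be such a point with smallest neighbourhood size $|N_{\mathcal{B}_i}(m_j)|$; set $M_j=M_{j-1}\cup\{m_j\}$. The output is $\alpha_{i+1}=M_r$. Different choices give different possible outputs. *)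

From mathcomp Require Import all_boot all_order all_algebra all_fingroup.
Set Implicit Arguments. Unset Strict Implicit. Unset Printing Implicit Defensive.
Import GRing.Theory Num.Theory.
Local Open Scope group_scope.

Definition rsubset (n r : nat) (a : {set 'I_n}) : Prop := #|a| = r.

(* G_i = G_(B_i): pointwise stabiliser in Sym([n]) of the family B of r-sets,
   for the induced action 'P^* of permutations on subsets of 'I_n. *)
Definition ptstab (n : nat) (B : {set {set 'I_n}}) : {set {perm 'I_n}} :=
  'C(B | 'P^*).

Definition nbhd (n : nat) (B : {set {set 'I_n}}) (u : 'I_n) : {set {set 'I_n}} :=
  [set a in B | u \in a].

Definition greedy_ratio (n : nat) (D M : {set 'I_n}) : rat :=
  ((#|D :\: M|)%:R / (#|D :&: M|.+1)%:R)%R.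

Definition pt_orbit (n : nat) (B : {set {set 'I_n}}) (x : 'I_n) : {set 'I_n} :=
  orbit 'P (ptstab B) x.

Definition max_orbit (n : nat) (B : {set {set 'I_n}}) (M D : {set 'I_n}) : Prop :=
  forall y : 'I_n, (greedy_ratio (pt_orbit B y) M <= greedy_ratio D M)%R.

Definition greedy_step (n : nat) (B : {set {set 'I_n}}) (M : {set 'I_n}) (m : 'I_n) : Prop :=
  m \notin M /\
  exists D : {set 'I_n},
    [/\ (exists x, D = pt_orbit B x), m \in D, max_orbit B M D &
        (greedy_ratio D M = 1%R ->
         forall (m' : 'I_n) (D' : {set 'I_n}),
           m' \notin M -> (exists x, D' = pt_orbit B x) -> m' \in D' ->
           max_orbit B M D' -> #|nbhd B m| <= #|nbhd B m'|)%N].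

(* alpha' is a possible output M_r of MetaGreedy(B): there are choices
   m_1, ..., m_r (indexed by 'I_r) such that each m_j is a legal step
   with M_{j-1} = {m_1, ..., m_{j-1}}, and alpha' = {m_1, ..., m_r}. *)
Definition metagreedy_output (n r : nat) (B : {set {set 'I_n}}) (a' : {set 'I_n}) : Prop :=
  exists m : 'I_r -> 'I_n,
    (forall j : 'I_r, greedy_step B [set m k | k : 'I_r & (k < j)%N] (m j)) /\
    a' = [set m k | k : 'I_r].

From mathcomp Require Import all_boot all_order all_algebra all_fingroup.
From mathcomp Require Import zify ring.
Set Implicit Arguments. Unset Strict Implicit. Unset Printing Implicit Defensive.
Import Order.TTheory GRing.Theory Num.Theory.
Local Open Scope group_scope.

(* The pointwise stabiliser G of B is the direct product of the symmetric
   groups on its orbits on [n], the cells (classes of points lying in the same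
   members of B).  So the G-orbit of a set S is determined by its profile, the
   number of points of S in each cell, and has size prod_C binomial(|C|, |C & S|).
   Moving a point of S from a cell X holding a points of S to a cell Y holding b
   of them multiplies this size by a (|Y| - b) / ((|X| - a + 1) (b + 1)).  If no
   such move enlarges the orbit of T, these factors are monotone enough that any
   r-set can be walked to T one point at a time without its orbit shrinking, so
   T has an orbit of maximal size.  A MetaGreedy step adds a point of a cell C
   maximising (|C| - c) / (c + 1), with c points of C already chosen, which
   preserves this stability: MetaGreedy outputs maximal orbits, and isomorphic
   stabilisers give equal orbit sizes.  Conversely, a greedy run can be kept
   inside a maximal set, except at a tie of ratio 1 whose tie-break leaves it;
   then one move between the two cells of ratio 1 keeps the orbit size and
   complements the profile in both cells, which changes the stabiliser only by
   conjugation. *)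

Section FiniteSets.
Variable T : finType.

Lemma perm_imset_id (h : {perm T}) (S : {set T}) :
  h @: S = S <-> {mono h : z / z \in S}.
Proof.
split=> [hS z | hS]; first by rewrite -{1}hS mem_imset //; apply: perm_inj.
apply/eqP; rewrite eqEcard card_imset ?leqnn ?andbT; last exact: perm_inj.
by apply/subsetP => _ /imsetP[z zS ->]; rewrite hS.
Qed.

Definition exchange (S : {set T}) x y := y |: (S :\ x).

Lemma card_exchange_meet (S C : {set T}) x y : x \in S -> y \notin S ->
  #|C :&: exchange S x y| + (x \in C) = #|C :&: S| + (y \in C).
Proof.
move=> xS yS; rewrite (cardsD1 x (C :&: S)) inE xS andbT.
have yD : y \notin C :&: S :\ x by rewrite !inE (negbTE yS) !andbF.
case: (boolP (y \in C)) => yC.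
  have -> : C :&: exchange S x y = y |: (C :&: S :\ x).
    apply/setP => z; rewrite !inE; case: eqP => [->|_] /=; rewrite ?yC //.
    by rewrite andbCA.
  by rewrite cardsU1 yD; lia.
have -> : C :&: exchange S x y = C :&: S :\ x.
  apply/setP => z; rewrite !inE; case: eqP => [->|_] /=; last by rewrite andbCA.
  by rewrite (negbTE yC) (negbTE yS) !andbF.
by rewrite addn0 addnC.
Qed.

Lemma card_exchange (S : {set T}) x y :
  x \in S -> y \notin S -> #|exchange S x y| = #|S|.
Proof.
by move=> xS yS; have := card_exchange_meet setT xS yS; rewrite !setTI !inE; lia.
Qed.

Lemma tperm_exchange (S : {set T}) x y :
  x \in S -> y \notin S -> tperm x y @: S = exchange S x y.
Proof.
move=> xS yS; have xy : x != y by apply: contraNneq yS => <-.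
apply/setP => z; rewrite -[z in LHS](tpermK x y) mem_imset ?inE; last exact: perm_inj.
case: tpermP => [-> | -> | /eqP zx /eqP zy]; rewrite ?eqxx ?xS ?(negbTE yS) ?orbF //.
  by rewrite (negbTE xy).
by rewrite (negbTE zx) (negbTE zy).
Qed.

Lemma card_setD_exchange (S S' : {set T}) x y :
  x \in S :\: S' -> y \in S' :\: S -> (#|exchange S x y :\: S'|).+1 = #|S :\: S'|.
Proof.
rewrite !inE => /andP[xS' xS] /andP[yS yS'].
have := card_exchange_meet (~: S') xS yS; rewrite !setDE !inE xS' yS' addn1 addn0.
by rewrite !(setIC (~: S')).
Qed.

Variable P : {set {set T}}.
Hypothesis partP : partition P [set: T].

Lemma card_partition_meet (A : {set T}) : \sum_(C in P) #|C :&: A| = #|A|.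
Proof.
have [/eqP covP tiP _] := and3P partP.
rewrite -[RHS]sum1_card (partition_big (pblock P) (mem P)) /=; last first.
  by move=> z _; rewrite pblock_mem // covP inE.
apply: eq_bigr => C PC; rewrite sum1_card; apply: eq_card => z; rewrite !inE andbC.
have Pz : z \in cover P by rewrite covP inE.
rewrite unfold_in; apply: andb_id2l => _; apply/idP/eqP => [zC | <-]; first exact: def_pblock.
by rewrite mem_pblock.
Qed.

Lemma card_sets_partition_meet (k : {set T} -> nat) :
  #|[set A : {set T} | [forall C in P, #|C :&: A| == k C]]| =
  (\prod_(C in P) 'C(#|C|, k C))%N.
Proof.
have [/eqP covP tiP _] := and3P partP.
have Pz z : z \in cover P by rewrite covP inE.
pose F C := [pred S : {set T} |
  if C \in P then (S \subset C) && (#|S| == k C) else S == set0].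
pose phi (A : {set T}) := [ffun C => if C \in P then C :&: A else set0].
have phi_inj : injective phi.
  move=> A1 A2 /ffunP E; apply/setP => z; have := E (pblock P z).
  by rewrite !ffunE pblock_mem // => /setP/(_ z); rewrite !inE mem_pblock Pz.
have phiE : phi @: [set A | [forall C in P, #|C :&: A| == k C]] = [set f in family F].
  apply/setP => f; rewrite inE; apply/imsetP/familyP => [[A] | Ff].
    rewrite inE => /forall_inP kA -> C; rewrite ffunE !inE.
    by case: ifP => PC; rewrite PC ?subsetIl ?kA.
  have FfP C : C \in P -> (f C \subset C) && (#|f C| == k C).
    by move=> PC; have := Ff C; rewrite unfold_in /= PC.
  pose A := \bigcup_(C in P) f C.
  have meetA C : C \in P -> C :&: A = f C.
    move=> PC; apply/setP => z; rewrite inE; apply/andP/idP => [[zC] | zf].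
      case/bigcupP => C' PC' zf; have /andP[sC' _] := FfP C' PC'.
      by rewrite -(def_pblock tiP PC zC) (def_pblock tiP PC' (subsetP sC' z zf)).
    have /andP[sC _] := FfP C PC.
    by split; [apply: (subsetP sC) | apply/bigcupP; exists C].
  exists A.
    by rewrite inE; apply/forall_inP => C PC; rewrite meetA //; case/andP: (FfP C PC).
  apply/ffunP => C; rewrite ffunE; case: ifP => PC; first by rewrite meetA.
  by have := Ff C; rewrite unfold_in /= PC => /eqP.
rewrite -(card_imset _ phi_inj) phiE cardsE card_family foldrE big_image /=.
rewrite [RHS]big_mkcond; apply: eq_bigr => C _; case: ifP => PC.
  by rewrite -cards_draws; apply: eq_card => S; rewrite !inE.
by apply: (@eq_card1 _ set0) => S; rewrite !inE.
Qed.

End FiniteSets.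

Section PointwiseStabiliser.
Variables (n : nat) (B : {set {set 'I_n}}).
Local Notation G := (ptstab B).
Local Notation cell := (pt_orbit B).

Lemma ptstabP (h : {perm 'I_n}) :
  reflect (forall b, b \in B -> {mono h : z / z \in b}) (h \in G).
Proof. by apply: (iffP astabP) => hB b /hB /perm_imset_id. Qed.

Lemma nbhd_ptstab (h : {perm 'I_n}) z : h \in G -> nbhd B (h z) = nbhd B z.
Proof.
by move/ptstabP=> hB; apply/setP => b; rewrite !inE; case Bb: (b \in B); rewrite /= ?hB.
Qed.

Lemma tperm_ptstab x y : nbhd B x = nbhd B y -> tperm x y \in G.
Proof.
move=> Nxy; apply/ptstabP => b Bb z.
have Exy : (x \in b) = (y \in b) by move/setP/(_ b): Nxy; rewrite !inE Bb.
by case: tpermP => [->|->|//].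
Qed.

Lemma pt_orbitE x : cell x = [set y | nbhd B y == nbhd B x].
Proof.
apply/setP => y; rewrite inE; apply/idP/eqP => [/orbitP[h hG <-] | Nyx].
  exact: nbhd_ptstab.
by apply/orbitP; exists (tperm x y); rewrite ?tperm_ptstab //= apermE tpermL.
Qed.

Lemma cell_refl x : x \in cell x.
Proof. by rewrite pt_orbitE inE. Qed.

Lemma mem_cell x y : (y \in cell x) = (cell y == cell x).
Proof.
apply/idP/eqP => [yx | <-]; last exact: cell_refl.
by move: yx; rewrite !pt_orbitE inE => /eqP Nyx; apply/setP => z; rewrite !inE Nyx.
Qed.

Lemma nbhd_cell x y : y \in cell x -> nbhd B y = nbhd B x.
Proof. by rewrite pt_orbitE inE => /eqP. Qed.

Lemma cell_eq x y : y \in cell x -> cell y = cell x.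
Proof. by rewrite mem_cell => /eqP. Qed.

Lemma mem_cell_sym x y : (y \in cell x) = (x \in cell y).
Proof. by rewrite !mem_cell eq_sym. Qed.

Lemma cell_ptstab (h : {perm 'I_n}) x z : h \in G -> (h z \in cell x) = (z \in cell x).
Proof. by move=> hG; rewrite !pt_orbitE !inE nbhd_ptstab. Qed.

Definition cells := preim_partition (nbhd B) [set: 'I_n].

Lemma cells_partition : partition cells [set: 'I_n].
Proof. exact: preim_partitionP. Qed.

Lemma cellsP C : reflect (exists x, C = cell x) (C \in cells).
Proof.
have cellE x : [set y in [set: 'I_n] | nbhd B x == nbhd B y] = cell x.
  by apply/setP => y; rewrite pt_orbitE !inE eq_sym.
apply: (iffP imsetP) => [[x _ ->] | [x ->]]; first by exists x.
by exists x; rewrite ?inE.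
Qed.

Lemma cell_cells x : cell x \in cells.
Proof. by apply/cellsP; exists x. Qed.

Definition profile (S : {set 'I_n}) x := #|cell x :&: S|.

Lemma profile_le (S : {set 'I_n}) x : profile S x <= #|cell x|.
Proof. by rewrite subset_leq_card ?subsetIl. Qed.

Lemma profile_cell (S : {set 'I_n}) x y : y \in cell x -> profile S y = profile S x.
Proof. by rewrite mem_cell /profile => /eqP ->. Qed.

Lemma profile_ptstab (S : {set 'I_n}) (h : {perm 'I_n}) x :
  h \in G -> profile (h @: S) x = profile S x.
Proof.
move=> hG; have /perm_imset_id hx : {mono h : z / z \in cell x}.
  by move=> z; apply: cell_ptstab.
have h_inj : injective h by apply: perm_inj.
by rewrite /profile -{1}hx -imsetI ?card_imset //; apply: in2W.
Qed.

Lemma profile_lt_witness (S S' : {set 'I_n}) x :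
  profile S' x < profile S x -> exists2 y, y \in cell x & y \in S :\: S'.
Proof.
move=> ltx; have [y] : exists y, y \in (cell x :&: S) :\: S'.
  apply/set0Pn; rewrite -card_gt0 cardsD subn_gt0 (leq_ltn_trans _ ltx) //.
  by rewrite subset_leq_card // setIAC subsetIl.
by rewrite !inE => /andP[yS' /andP[yx yS]]; exists y; rewrite // inE yS' yS.
Qed.

Lemma card_profile_eq (S S' : {set 'I_n}) :
  (forall x, profile S' x = profile S x) -> #|S'| = #|S|.
Proof.
move=> ES; rewrite -!(card_partition_meet cells_partition).
by apply: eq_bigr => _ /cellsP[x ->]; apply: ES.
Qed.

Lemma orbit_profileP (S S' : {set 'I_n}) :
  reflect (forall x, profile S' x = profile S x) (S' \in orbit 'P^* G S).
Proof.
apply: (iffP idP) => [/orbitP[h hG <-] x | ].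
  exact: profile_ptstab.
move eqk : #|S' :\: S| => k; elim: k S' eqk => [|k IHk] S' eqk ES.
  suff -> : S' = S by apply: orbit_refl.
  by apply/eqP; rewrite eqEcard -setD_eq0 -cards_eq0 eqk (card_profile_eq ES) /=.
have [x xS'S] : exists x, x \in S' :\: S by apply/set0Pn; rewrite -card_gt0 eqk.
have [y yS'S] : exists y, y \in (cell x :&: S) :\: S'.
  apply/set0Pn; apply: contraTneq xS'S => /eqP; rewrite setD_eq0 => sub.
  have: cell x :&: S = cell x :&: S'.
    by apply/eqP; rewrite eqEcard subsetI subsetIl sub -/(profile S' x) ES leqnn.
  move/setP/(_ x); rewrite !inE cell_refl /=.
  by move=> ->; rewrite andNb.
move: yS'S; rewrite !inE => /andP[yS' /andP[yx yS]].
have yS'S : y \in S :\: S' by rewrite inE yS' yS.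
have hG : tperm x y \in G by apply/tperm_ptstab/esym/nbhd_cell.
have xS' : x \in S' by case/setDP: xS'S.
have S''S : exchange S' x y \in orbit 'P^* G S.
  apply: IHk; first by apply/eqP; rewrite -eqSS (card_setD_exchange xS'S yS'S) eqk.
  by move=> z; rewrite -tperm_exchange // profile_ptstab.
apply: orbit_trans S''S; rewrite orbit_sym -tperm_exchange //; exact: mem_orbit.
Qed.

Lemma card_orbit_ptstab (S : {set 'I_n}) :
  #|orbit 'P^* G S| = (\prod_(C in cells) 'C(#|C|, #|C :&: S|))%N.
Proof.
rewrite -(card_sets_partition_meet cells_partition); apply: eq_card => S'.
rewrite inE; apply/orbit_profileP/forall_inP => [ES _ /cellsP[x ->] | ES x].
  by rewrite -/(profile S' x) ES.
by apply/eqP/ES/cell_cells.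
Qed.

Lemma profile_exchange (S : {set 'I_n}) x y z : x \in S -> y \notin S ->
  profile (exchange S x y) z + (x \in cell z) = profile S z + (y \in cell z).
Proof. exact: card_exchange_meet. Qed.

Lemma card_orbit_exchange (S : {set 'I_n}) x y :
  x \in S -> y \notin S -> y \notin cell x ->
  (#|orbit 'P^* G (exchange S x y)| * ((#|cell x| - profile S x).+1 * (profile S y).+1) =
   #|orbit 'P^* G S| * (profile S x * (#|cell y| - profile S y)))%N.
Proof.
move=> xS yS yx; have cyx : cell y != cell x by rewrite -mem_cell.
have xy : x \notin cell y by rewrite mem_cell_sym.
have Ex := profile_exchange x xS yS; rewrite cell_refl (negbTE yx) addn0 addn1 in Ex.
have Ey := profile_exchange y xS yS; rewrite cell_refl (negbTE xy) addn0 addn1 in Ey.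
have split2 (F : {set 'I_n} -> nat) : (\prod_(C in cells) F C =
    F (cell x) * (F (cell y) * \prod_(C in cells | (C != cell x) && (C != cell y)) F C))%N.
  rewrite (bigD1 (cell x)) ?cell_cells //= (bigD1 (cell y)) /= ?cell_cells ?cyx //.
  by congr (_ * (_ * _))%N; apply: eq_bigl => C; rewrite andbA.
rewrite !card_orbit_ptstab !split2.
have -> : (\prod_(C in cells | (C != cell x) && (C != cell y))
              'C(#|C|, #|C :&: exchange S x y|) =
           \prod_(C in cells | (C != cell x) && (C != cell y)) 'C(#|C|, #|C :&: S|))%N.
  apply: eq_bigr => _ /andP[/cellsP[z ->] /andP[zx zy]].
  have := profile_exchange z xS yS.
  rewrite !mem_cell !(eq_sym _ (cell z)) (negbTE zx) (negbTE zy) !addn0.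
  by rewrite /profile => ->.
rewrite -!/(profile _ x) -!/(profile _ y) -Ex Ey.
have ax := profile_le S x; rewrite -Ex in ax.
move: (profile (exchange S x y) x) (profile S y) #|cell x| #|cell y| ax => a b d e ad.
have -> : (d - a.+1).+1 = d - a by lia.
set R := (\prod_(C in cells | _) _)%N.
transitivity (R * ((d - a) * 'C(d, a)) * (b.+1 * 'C(e, b.+1)))%N; first by ring.
by rewrite -mul_bin_left (mul_bin_left e b); ring.
Qed.

Definition orbit_maximal r (T : {set 'I_n}) :=
  forall S : {set 'I_n}, #|S| = r -> #|orbit 'P^* G S| <= #|orbit 'P^* G T|.

(* By card_orbit_exchange: no move of a point of T from the cell of x to the
   cell of y enlarges its orbit. *)
Definition exchange_stable (T : {set 'I_n}) := forall x y,
  0 < profile T x -> profile T y < #|cell y| ->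
  profile T x * (#|cell y| - profile T y) <= (#|cell x| - profile T x).+1 * (profile T y).+1.

Lemma orbit_gt0 (S : {set 'I_n}) : 0 < #|orbit 'P^* G S|.
Proof. by apply/card_gt0P; exists S; apply: orbit_refl. Qed.

Lemma orbit_maximal_exchange_stable r (T : {set 'I_n}) :
  #|T| = r -> orbit_maximal r T -> exchange_stable T.
Proof.
move=> cardT maxT x y ax ay; have [yx | yx] := boolP (y \in cell x).
  rewrite (profile_cell _ yx) (cell_eq yx).
  by move: (profile T x) (#|cell x|) => a d; nia.
rewrite leqNgt; apply/negP => gainxy.
have [x0 x0x] : exists2 x0, x0 \in cell x & x0 \in T :\: set0.
  by apply: profile_lt_witness; rewrite /profile setI0 cards0.
rewrite setD0 => x0T.
have [y0 y0y] : exists2 y0, y0 \in cell y & y0 \in setT :\: T.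
  by apply: profile_lt_witness; rewrite /profile setIT.
rewrite setTD inE => y0T; have Ex := cell_eq x0x; have Ey := cell_eq y0y.
have y0x0 : y0 \notin cell x0 by rewrite mem_cell Ex Ey -mem_cell.
have := card_orbit_exchange x0T y0T y0x0.
rewrite Ex Ey (profile_cell _ x0x) (profile_cell _ y0y).
have := maxT _ (etrans (card_exchange x0T y0T) cardT).
have := orbit_gt0 T; move: gainxy; rewrite /profile.
move: #|orbit _ _ (exchange _ _ _)| #|orbit _ _ T| => o' o; nia.
Qed.

Lemma profile_le_eq (S T : {set 'I_n}) : #|S| = #|T| ->
  (forall x, profile S x <= profile T x) -> forall x, profile S x = profile T x.
Proof.
move=> cardST leST x; have le C : C \in cells ->
    #|C :&: S| <= #|C :&: T| ?= iff (#|C :&: S| == #|C :&: T|).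
  by case/cellsP => z ->; apply/leqif_eq/leST.
have [_] := leqif_sum le; rewrite !(card_partition_meet cells_partition) cardST eqxx.
by move/esym/forall_inP/(_ _ (cell_cells x))/eqP.
Qed.

Lemma profile_surplus_deficit (S T : {set 'I_n}) : #|S| = #|T| ->
  ~~ [forall x, profile S x == profile T x] ->
  exists j k, profile T j < profile S j /\ profile S k < profile T k.
Proof.
move=> cardST /forallPn[x neqx].
have [/existsP[j ltj] | /existsPn geT] := boolP [exists j, profile T j < profile S j].
  have [/existsP[k ltk] | /existsPn geS] := boolP [exists k, profile S k < profile T k].
    by exists j, k.
  have leTS z : profile T z <= profile S z by rewrite leqNgt geS.
  by rewrite (profile_le_eq (esym cardST) leTS) eqxx in neqx.
have leST z : profile S z <= profile T z by rewrite leqNgt geT.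
by rewrite (profile_le_eq cardST leST) eqxx in neqx.
Qed.

Lemma exchange_stable_gain (S T : {set 'I_n}) j k : exchange_stable T ->
  profile T j < profile S j -> profile S k < profile T k ->
  (#|cell j| - profile S j).+1 * (profile S k).+1 <= profile S j * (#|cell k| - profile S k).
Proof.
move=> stT ltj ltk; have leS := profile_le S j; have leT := profile_le T k.
have st := stT k j (leq_ltn_trans (leq0n _) ltk) (leq_trans ltj leS).
apply: leq_trans (_ : (#|cell j| - profile T j) * profile T k <= _).
  exact: leq_mul (ltn_sub2l (leq_trans ltj leS) ltj) ltk.
rewrite mulnC; apply: leq_trans st _; rewrite [X in X <= _]mulnC.
exact: leq_mul ltj (ltn_sub2l (leq_trans ltk leT) ltk).
Qed.

Lemma exchange_stable_orbit_maximal r (T : {set 'I_n}) :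
  #|T| = r -> exchange_stable T -> orbit_maximal r T.
Proof.
(* Induction on |S :\: T|: moving S one point towards T does not shrink its orbit. *)
move=> cardT stT S; move eqm : #|S :\: T| => m.
elim: m S eqm => [|m IHm] S eqm cardS.
  suff -> : S = T by [].
  by apply/eqP; rewrite eqEcard -setD_eq0 -cards_eq0 eqm cardS cardT /=.
have [/forallP eqST | neST] := boolP [forall x, profile S x == profile T x].
  by have /orbit_eqP -> : S \in orbit 'P^* G T by apply/orbit_profileP => x; apply/eqP.
have [j [k [ltj ltk]]] := profile_surplus_deficit (etrans cardS (esym cardT)) neST.
have [x0 x0j x0ST] := profile_lt_witness ltj.
have [y0 y0k y0TS] := profile_lt_witness ltk.
have [x0S x0T] := setDP x0ST; have [y0T y0S] := setDP y0TS.
have Ex := cell_eq x0j; have Ey := cell_eq y0k.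
have y0x0 : y0 \notin cell x0.
  rewrite mem_cell Ex Ey; apply: contraTneq ltk; rewrite /profile => ->.
  by rewrite -leqNgt ltnW.
have eqm' : #|exchange S x0 y0 :\: T| = m.
  by apply/eqP; rewrite -eqSS (card_setD_exchange x0ST y0TS) eqm.
have le' := IHm _ eqm' (etrans (card_exchange x0S y0S) cardS).
apply: leq_trans le'.
have E := card_orbit_exchange x0S y0S y0x0.
rewrite Ex Ey (profile_cell _ x0j) (profile_cell _ y0k) in E.
have := leq_mul (leqnn #|orbit 'P^* G S|) (exchange_stable_gain stT ltj ltk).
by rewrite -E leq_pmul2r.
Qed.

Lemma greedy_ratio_cell (M : {set 'I_n}) x :
  greedy_ratio (cell x) M = ((#|cell x| - profile M x)%:R / (profile M x).+1%:R)%R.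
Proof. by rewrite /greedy_ratio cardsD. Qed.

Lemma greedy_ratio_le (M : {set 'I_n}) x y :
  (greedy_ratio (cell x) M <= greedy_ratio (cell y) M)%R =
  ((#|cell x| - profile M x) * (profile M y).+1 <=
   (#|cell y| - profile M y) * (profile M x).+1).
Proof.
rewrite !greedy_ratio_cell ler_pdivrMr ?ltr0Sn // mulrAC ler_pdivlMr ?ltr0Sn //.
by rewrite -!natrM ler_nat.
Qed.

Lemma greedy_ratio_eq1 (M : {set 'I_n}) x :
  (greedy_ratio (cell x) M == 1%R) = (#|cell x| - profile M x == (profile M x).+1).
Proof.
rewrite greedy_ratio_cell -[X in _ == X](divr1 1%R) eqr_div ?oner_neq0 ?pnatr_eq0 //.
by rewrite mulr1 mul1r eqr_nat.
Qed.

Definition ratio_max (M : {set 'I_n}) m :=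
  forall y, (greedy_ratio (cell y) M <= greedy_ratio (cell m) M)%R.

Lemma greedy_stepP (M : {set 'I_n}) m : greedy_step B M m <->
  [/\ m \notin M, ratio_max M m &
      greedy_ratio (cell m) M = 1%R -> forall m', m' \notin M -> ratio_max M m' ->
      #|nbhd B m| <= #|nbhd B m'|].
Proof.
split=> [[mM [D [[x Dx] mD maxD tieD]]] | [mM maxm tiem]].
  have Dm : D = cell m by move: mD; rewrite Dx => /cell_eq ->.
  split=> // [y | rm1 m' m'M maxm']; first by rewrite -Dm; apply: maxD.
  by apply: (tieD _ m' (cell m')) => //; [rewrite Dm | exists m' | apply: cell_refl].
split=> //; exists (cell m); split=> //; [by exists m | exact: cell_refl |].
move=> rm1 m' D' m'M [x D'x] m'D' maxD'; apply: tiem => // y.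
have -> : cell m' = D' by move: m'D'; rewrite D'x => /cell_eq.
exact: maxD'.
Qed.

Lemma profile_setU1 (M : {set 'I_n}) m z : m \notin M ->
  profile (m |: M) z = (m \in cell z) + profile M z.
Proof.
move=> mM; rewrite /profile setIUr; case: (boolP (m \in cell z)) => mz.
  rewrite (setIidPr _) ?sub1set //.
  by rewrite cardsU1 inE (negbTE mM) andbF.
rewrite (_ : cell z :&: [set m] = set0) ?set0U //.
by apply/setP => u; rewrite !inE; case: (eqVneq u m) => [->|]; rewrite ?andbF ?(negbTE mz).
Qed.

Lemma greedy_step_exchange_stable (M : {set 'I_n}) m :
  greedy_step B M m -> exchange_stable M -> exchange_stable (m |: M).
Proof.
case/greedy_stepP=> mM maxm _ stM x y; rewrite !profile_setU1 //.
have [mx | mx] := boolP (m \in cell x); have [my | my] := boolP (m \in cell y).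
- have yx : y \in cell x by rewrite mem_cell -(cell_eq my) (cell_eq mx).
  rewrite (profile_cell M yx) (cell_eq yx) => _ _.
  by move: (profile M x) #|cell x| => a d; nia.
- have := maxm y; rewrite greedy_ratio_le (profile_cell M mx) (cell_eq mx).
  have := profile_le (m |: M) x; rewrite profile_setU1 // mx.
  by move: (profile M x) (profile M y) #|cell x| #|cell y| => a b d e; nia.
- move=> ax ay; have := stM x y ax (ltn_trans (ltnSn _) ay).
  by move: ay (profile M x) (profile M y) #|cell x| #|cell y| => + a b d e; nia.
- exact: stM.
Qed.

Lemma metagreedy_output_maximal r (S : {set 'I_n}) :
  metagreedy_output r B S -> #|S| = r /\ orbit_maximal r S.
Proof.
case=> m [steps ->]; pose M j := [set m k | k : 'I_r & k < j].
suff /(_ r (leqnn r)) [cardM stM] : forall j, j <= r -> #|M j| = j /\ exchange_stable (M j).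
  have -> : [set m k | k : 'I_r] = M r.
    by apply/setP => z; apply/imsetP/imsetP => -[k kP ->]; exists k; rewrite ?inE.
  by split=> //; apply: exchange_stable_orbit_maximal.
elim=> [|j IHj] ltjr.
  have -> : M 0 = set0.
    by apply/setP => z; rewrite inE; apply/imsetP => -[k]; rewrite inE ltn0.
  by split=> [|x y]; rewrite ?cards0 // /profile setI0 cards0.
pose k0 := Ordinal ltjr; have step := steps k0.
have Mj1 : M j.+1 = m k0 |: M j.
  apply/setP => z; rewrite !inE; apply/imsetP/idP => [[k] | ].
    rewrite inE ltnS leq_eqVlt => /orP[/eqP kj | kj] ->.
      by rewrite (_ : k = k0) ?eqxx //; apply: val_inj.
    by apply/orP; right; apply/imsetP; exists k; rewrite ?inE.
  case/orP => [/eqP -> | /imsetP[k kj ->]]; first by exists k0; rewrite ?inE.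
  by exists k; rewrite // inE ltnW //; move: kj; rewrite inE.
have [cardMj stMj] := IHj (ltnW ltjr); have /greedy_stepP[mM _ _] := step.
rewrite Mj1 cardsU1 mM cardMj; split=> //.
exact: greedy_step_exchange_stable.
Qed.

Definition profile_equiv_compl (T S : {set 'I_n}) :=
  forall x, profile T x = profile S x \/ profile T x + profile S x = #|cell x|.

Lemma stab_isog_profile_equiv_compl (T S : {set 'I_n}) :
  profile_equiv_compl T S -> 'C_G[S | 'P^*] \isog 'C_G[T | 'P^*].
Proof.
(* Complementing S inside the cells where its profile differs from that of T
   keeps its stabiliser in G and lands in the G-orbit of T. *)
move=> eqTS; pose keep x := profile S x == profile T x.
pose S' := [set x | if keep x then x \in S else x \notin S].
have keepG (h : {perm 'I_n}) z : h \in G -> keep (h z) = keep z.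
  by move=> hG; rewrite /keep !(profile_cell _ (_ : h z \in cell z)) ?cell_ptstab ?cell_refl.
have stabSS' : 'C_G[S | 'P^*] = 'C_G[S' | 'P^*].
  apply/setP => h; rewrite (in_setI h G) (in_setI h G); apply: andb_id2l => hG.
  apply/astab1P/astab1P => /= /perm_imset_id hS; apply/perm_imset_id => z.
    by rewrite !inE keepG //; case: (keep z); rewrite hS.
  by have := hS z; rewrite !inE keepG //; case: (keep z) => // /negb_inj.
have profS' x : profile S' x = profile T x.
  rewrite /profile; have -> : cell x :&: S' = if keep x then cell x :&: S else cell x :\: S.
    apply/setP => z; rewrite !inE; have [zx | zx] := boolP (z \in cell x).
      rewrite /keep !(profile_cell _ zx).
      by case: (_ == _); rewrite (in_setI, in_setD) zx ?andbT.
    by case: (keep x); rewrite (in_setI, in_setD) (negbTE zx) ?andbF.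
  rewrite /keep; case: eqP => [// | neST]; rewrite cardsD.
  by case: (eqTS x) => [eqST | ]; [case: neST | rewrite /profile; lia].
rewrite stabSS'; have /orbitP[h hG <-] : S' \in orbit 'P^* G T by apply/orbit_profileP.
rewrite astab1_act.
have -> : G :&: 'C[T | 'P^*] :^ h = 'C_G[T | 'P^*] :^ h.
  by rewrite [RHS]conjIg (conjGid hG).
by rewrite isog_sym conj_isog.
Qed.

Section GreedyExtension.
Variables (M T : {set 'I_n}).
Hypotheses (subMT : M \subset T) (stT : exchange_stable T).

Lemma profile_lt_deficit z : z \in T :\: M -> profile M z < profile T z.
Proof.
case/setDP=> zT zM; rewrite proper_card // properEneq setIS // andbT.
by apply: contraNneq zM => /setP/(_ z); rewrite !inE cell_refl zT /= => ->.
Qed.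

Lemma profile_eq_no_deficit y :
  {in cell y, forall u, u \notin T :\: M} -> profile T y = profile M y.
Proof.
move=> nodef; rewrite /profile; suff -> : cell y :&: T = cell y :&: M by [].
apply/eqP; rewrite eqEsubset [X in _ && X]setIS // andbT.
apply/subsetP => u /setIP[uy uT]; rewrite inE uy /=.
by apply: contraR (nodef u uy) => uM; rewrite inE uM.
Qed.

Lemma ratio_max_deficit z : z \in T :\: M ->
  {in T :\: M, forall u, greedy_ratio (cell u) M <= greedy_ratio (cell z) M}%R ->
  ratio_max M z.
Proof.
move=> zd zmax y.
have [u /andP[uy ud] | nodef] := pickP [pred u | (u \in cell y) && (u \in T :\: M)].
  by rewrite -(cell_eq uy) zmax.
have eqy : profile T y = profile M y.
  by apply: profile_eq_no_deficit => u uy; have := nodef u; rewrite /= uy => /negbT.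
rewrite greedy_ratio_le; have [lty | ] := ltnP (profile M y) #|cell y|; last first.
  by rewrite -subn_eq0 => /eqP ->.
have ltz := profile_lt_deficit zd.
have ltTy : profile T y < #|cell y| by rewrite eqy.
have := stT (leq_ltn_trans (leq0n _) ltz) ltTy; rewrite eqy.
move: ltz (profile_le T z); rewrite /profile.
by move: #|cell z :&: M| #|cell z :&: T| #|cell y :&: M| #|cell z| #|cell y| => c a b d e; nia.
Qed.

Lemma exchange_tie z w : z \in T :\: M -> w \notin T -> w \notin cell z ->
  profile T w = profile M w ->
  #|cell z| - profile M z = (profile M z).+1 -> #|cell w| - profile M w = (profile M w).+1 ->
  #|orbit 'P^* G (exchange T z w)| = #|orbit 'P^* G T| /\
  profile_equiv_compl (exchange T z w) T.
Proof.
move=> zd wT wz eqw tiez tiew; have zT : z \in T by case/setDP: zd.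
have ltz := profile_lt_deficit zd.
have ltw : profile T w < #|cell w| by rewrite eqw; lia.
have eqz : profile T z = (profile M z).+1.
  have := stT (leq_ltn_trans (leq0n _) ltz) ltw; move: ltz tiez tiew; rewrite eqw /profile.
  by move: #|cell z :&: M| #|cell z :&: T| #|cell w :&: M| #|cell z| #|cell w|; nia.
have E := card_orbit_exchange zT wT wz.
have fz : (#|cell z| - profile T z).+1 = profile T z by rewrite eqz; lia.
have fw : #|cell w| - profile T w = (profile T w).+1 by rewrite eqw.
rewrite fz fw in E; split.
  apply/eqP; rewrite -(eqn_pmul2r (_ : 0 < profile T z * (profile T w).+1)) ?E //.
  by rewrite muln_gt0 eqz.
move=> x; have := profile_exchange x zT wT.
have [zx | zx] := boolP (z \in cell x).
  rewrite (negbTE (_ : w \notin cell x)) -?(cell_eq zx) // -(profile_cell T zx) => E'.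
  by right; lia.
have [wx | wx] := boolP (w \in cell x); last by left; lia.
by rewrite -(profile_cell T wx) -(cell_eq wx) => E'; right; lia.
Qed.

End GreedyExtension.

Lemma greedy_step_cell (M : {set 'I_n}) w m :
  ratio_max M w -> (forall w', w' \notin M -> ratio_max M w' -> #|nbhd B w| <= #|nbhd B w'|) ->
  m \notin M -> m \in cell w -> greedy_step B M m.
Proof.
move=> maxw minw mM mw; apply/greedy_stepP; rewrite /ratio_max (cell_eq mw).
by rewrite (nbhd_cell mw); split=> // _; apply: minw.
Qed.

Lemma exists_greedy_min (M : {set 'I_n}) z : z \notin M -> ratio_max M z ->
  exists w, [/\ w \notin M, ratio_max M w &
    forall w', w' \notin M -> ratio_max M w' -> #|nbhd B w| <= #|nbhd B w'|].
Proof.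
move=> zM maxz; pose cand w := (w \notin M) &&
  [forall y, greedy_ratio (cell y) M <= greedy_ratio (cell w) M]%R.
have [|w /andP[wM /forallP maxw] minw] := arg_minnP (fun w => #|nbhd B w|) (_ : cand z).
  by rewrite /cand zM; apply/forallP.
by exists w; split=> // w' w'M maxw'; apply: minw; rewrite /cand w'M; apply/forallP.
Qed.

Lemma greedy_step_extend r (M T : {set 'I_n}) :
  M \subset T -> #|M| < #|T| -> #|T| = r -> orbit_maximal r T ->
  exists m (T' : {set 'I_n}),
    [/\ greedy_step B M m, m |: M \subset T', #|T'| = r, orbit_maximal r T' &
        'C_G[T | 'P^*] \isog 'C_G[T' | 'P^*]].
Proof.
move=> subMT ltMT cardT maxT; have stT := orbit_maximal_exchange_stable cardT maxT.
have [u0 u0d] : exists u0, u0 \in T :\: M.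
  by apply/set0Pn; rewrite -card_gt0 cardsD (setIidPr subMT) subn_gt0.
have [z zd zmax] := arg_maxP (fun u => greedy_ratio (cell u) M) u0d.
have {}zd : z \in T :\: M := zd.
have maxz := ratio_max_deficit subMT stT zd zmax; have /setDP[zT zM] := zd.
have keepT m : m \in T :\: M -> m |: M \subset T.
  by case/setDP=> mT _; rewrite subUset sub1set mT.
have [rz1 | rz1] := eqVneq (greedy_ratio (cell z) M) 1%R; last first.
  exists z, T; split=> //; [| exact: keepT | exact: isog_refl].
  by apply/greedy_stepP; split=> // /eqP; rewrite (negbTE rz1).
have [w [wM maxw minw]] := exists_greedy_min zM maxz.
have [u /andP[uw ud] | nodef] := pickP [pred u | (u \in cell w) && (u \in T :\: M)].
  exists u, T; split=> //; [| exact: keepT | exact: isog_refl].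
  by apply: greedy_step_cell maxw minw _ uw; case/setDP: ud.
(* The tie-break w lies in a cell with no point of T :\: M: trade z for w. *)
have wT : w \notin T by have := nodef w; rewrite /= cell_refl !inE wM => /negbT.
have wz : w \notin cell z.
  by apply: contraT => /negPn wz; have := nodef z; rewrite /= -mem_cell_sym wz /= zd.
have eqw : profile T w = profile M w.
  by apply: profile_eq_no_deficit => // u uw; have := nodef u; rewrite /= uw => /negbT.
have rw1 : greedy_ratio (cell w) M = 1%R.
  by apply/eqP; rewrite -rz1 eq_le maxz maxw.
move: rz1 rw1 => /eqP + /eqP; rewrite !greedy_ratio_eq1 => /eqP tiez /eqP tiew.
have [eqo eqv] := exchange_tie subMT stT zd wT wz eqw tiez tiew.
exists w, (exchange T z w); split.
- exact: greedy_step_cell maxw minw wM (cell_refl w).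
- by rewrite /exchange setUS // subsetD1 subMT.
- by rewrite card_exchange.
- by move=> S cardS; rewrite eqo; apply: maxT.
- exact: stab_isog_profile_equiv_compl.
Qed.

Lemma greedy_run_of_orbit_maximal r (S : {set 'I_n}) x0 : #|S| = r -> orbit_maximal r S ->
  forall s, s <= r -> exists ms : seq 'I_n, exists T : {set 'I_n},
  [/\ size ms = s, #|[set x in ms]| = s,
      forall j, j < s -> greedy_step B [set x in take j ms] (nth x0 ms j),
      [set x in ms] \subset T &
      [/\ #|T| = r, orbit_maximal r T & 'C_G[S | 'P^*] \isog 'C_G[T | 'P^*]]].
Proof.
move=> cardS maxS; elim=> [|s IHs] lesr.
  exists [::], S; split=> //; last by split=> //; apply: isog_refl.
    by apply/eqP; rewrite cards_eq0; apply/eqP/setP => z; rewrite !inE.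
  by apply/subsetP => z; rewrite inE.
have [ms [T [sizems cardms steps subT [cardT maxT isoT]]]] := IHs (ltnW lesr).
have [|m [T' [step subT' cardT' maxT' isoT']]] := greedy_step_extend subT _ cardT maxT.
  by rewrite cardms cardT.
have /greedy_stepP[mM _ _] := step.
have msm : [set x in rcons ms m] = m |: [set x in ms].
  by apply/setP => z; rewrite !inE mem_rcons in_cons.
exists (rcons ms m), T'; split; rewrite ?msm //.
- by rewrite size_rcons sizems.
- by rewrite cardsU1 mM cardms.
- move=> j; rewrite ltnS leq_eqVlt -cats1 => /orP[/eqP -> | ltjs].
    by rewrite -sizems take_size_cat // nth_cat ltnn subnn.
  by rewrite takel_cat ?sizems 1?ltnW // nth_cat sizems ltjs; apply: steps.
- by split=> //; apply: isog_trans isoT isoT'.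
Qed.

Lemma metagreedy_output_seq r x0 (ms : seq 'I_n) : size ms = r ->
  (forall j, j < r -> greedy_step B [set x in take j ms] (nth x0 ms j)) ->
  metagreedy_output r B [set x in ms].
Proof.
move=> sizems steps; exists (fun k : 'I_r => nth x0 ms k).
have takeE j : j <= r -> [set nth x0 ms k | k : 'I_r & k < j] = [set x in take j ms].
  move=> lejr; apply/setP => z; rewrite inE; apply/imsetP/idP => [[k] | ].
    by rewrite inE => ltkj ->; rewrite -(nth_take x0 ltkj) mem_nth // size_takel ?sizems.
  case/(nthP x0) => i; rewrite size_takel ?sizems // => ltij <-.
  by exists (Ordinal (leq_trans ltij lejr)); rewrite ?inE // nth_take.
split=> [j | ]; first by rewrite takeE 1?ltnW //; apply: steps.
have -> : [set x in ms] = [set x in take r ms] by rewrite -sizems take_size.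
rewrite -takeE //; apply/setP => z.
by apply/imsetP/imsetP => -[k kP ->]; exists k; rewrite ?inE.
Qed.

End PointwiseStabiliser.

Lemma card_orbit_isog (aT : finGroupType) (rT : finType) (to : {action aT &-> rT})
    (G : {group aT}) x y :
  'C_G[x | to] \isog 'C_G[y | to] -> #|orbit to G x| = #|orbit to G y|.
Proof.
move/card_isog=> Exy; apply/eqP; rewrite -(eqn_pmul2r (cardG_gt0 'C_G[x | to]%G)).
by rewrite card_orbit_stab Exy card_orbit_stab.
Qed.

Theorem lemma2p2 (n r : nat) (B : {set {set 'I_n}}) (alpha : {set 'I_n}) :
  (4 <= 2 * r)%N -> (2 * r < n)%N ->
  (forall b, b \in B -> rsubset r b) ->
  rsubset r alpha ->
  (forall beta : {set 'I_n}, rsubset r beta ->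
     #|orbit 'P^* (ptstab B) beta| <= #|orbit 'P^* (ptstab B) alpha|)%N
  <->
  (exists alpha' : {set 'I_n},
     metagreedy_output r B alpha' /\
     'C_(ptstab B)[alpha | 'P^*] \isog 'C_(ptstab B)[alpha' | 'P^*]).
Proof.
move=> _ ltrn _ cardA; split=> [maxA | [A' [outA' isoA']] beta cardb].
  have x0 : 'I_n by exists 0; lia.
  have [ms [T [sizems cardms steps subT [cardT _ isoT]]]] :=
    greedy_run_of_orbit_maximal x0 cardA maxA (leqnn r).
  have ET : [set x in ms] = T by apply/eqP; rewrite eqEcard subT cardT cardms /=.
  rewrite -ET in isoT; exists [set x in ms]; split=> //.
  exact: metagreedy_output_seq sizems steps.
have [cardA' maxA'] := metagreedy_output_maximal outA'.
by rewrite (card_orbit_isog isoA'); apply: maxA'.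
Qed.
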